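(* Let $n=mp$, where $m$ is a positive integer and $p$ is a prime with $\gcd(m,p)=1$. Let $s,t$ be positive integers with $st=p-1$, and let $g$ be a generator of $\mathbb{Z}_p^\times$. Let $e$ be an integer satisfying $$e\equiv 1\pmod m,\qquad e\equiv g^t\pmod p,$$ and let $G=\langle e\rangle$ be the subgroup of $\mathbb{Z}_n^\times$ generated by $e$. Then the coset index function $f_G$ is an $(mp,\ m(1+t),\ \{0,m(s-1)\})$ zero-difference function.
   Context: For a subgroup $G$ of $\mathbb{Z}_n^\times$ and $r\in\mathbb{Z}_n$, the coset $rG=\{rg\mid g\in G\}$; these cosets partition $\mathbb{Z}_n$, forming a set $D_G$. The coset index function induced by $G$ is $f_G:\mathbb{Z}_n\to\mathbb{Z}_{|D_G|}$, $f_G(x)=h_G(C_x)$, where $C_x$ is the coset containing $x$ and $h_G:D_G\to\mathbb{Z}_{|D_G|}$ is a fixed bijection. A function $f:A\to B$ between finite abelian groups is an $(n,m,S)$ zero-difference function if $n=|A|$, $m=|f(A)|$, and for every nonzero $a\in A$, $|\{x\in A\mid f(x+a)=f(x)\}|\in S$. Here $A=(\mathbb{Z}_n,+)$. *)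

From HB Require Import structures.
From mathcomp Require Import all_boot all_order all_algebra all_fingroup.
Set Implicit Arguments. Unset Strict Implicit. Unset Printing Implicit Defensive.
Import GRing.Theory.
Local Open Scope ring_scope.

Definition coset_of (R : finUnitRingType) (G : {set {unit R}}) (r : R) : {set R} :=
  [set r * val u | u in G].

Definition cosets_of (R : finUnitRingType) (G : {set {unit R}}) : {set {set R}} :=
  [set coset_of G r | r : R].

(* The coset index function f_G x = h_G(C_x), where C_x is the coset
   containing x (namely xG, since 1 \in G) and h : D_G -> Z_{|D_G|}. *)
Definition coset_index_fun (R : finUnitRingType) (G : {set {unit R}})
  (h : {set R} -> 'I_#|cosets_of G|) (x : R) : 'I_#|cosets_of G| :=
  h (coset_of G x).

Definition bij_on_cosets (R : finUnitRingType) (G : {set {unit R}})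
  (h : {set R} -> 'I_#|cosets_of G|) : Prop :=
  {in cosets_of G &, injective h} /\
  (forall y, exists2 C, C \in cosets_of G & h C = y).

Definition zero_difference_fun (A : finZmodType) (B : finType) (f : A -> B)
  (n m : nat) (S : seq nat) : Prop :=
  [/\ #|A| = n, #|f @: A| = m &
      forall a : A, a != 0 -> #|[set x : A | f (x + a) == f x]| \in S].

(* Let red : Z_(mp) -> Z_p be reduction mod p and c = red e, of order s.  By the
   Chinese remainder theorem x is determined by red x and its class mod m.
   Every element of G = <e> is 1 mod m, so the coset xG is {x} when red x = 0
   (m such cosets) and has s elements otherwise (m(p-1)/s = mt such cosets).
   Moreover x + a lies in xG iff a = x(v - 1) for some v in G.  This forces
   a = 0 mod m, and then a != 0 gives red a != 0, so the condition says that
   red x is one of the s - 1 values red a / (c^k - 1), 0 < k < s, each of which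
   has m preimages. *)

From Pilot Require Import Defs.
From HB Require Import structures.
From mathcomp Require Import all_boot all_order all_algebra all_fingroup all_solvable.

Set Implicit Arguments.
Unset Strict Implicit.
Unset Printing Implicit Defensive.

Import GRing.Theory.
Local Open Scope ring_scope.

Section Cosets.
Variables (R : finUnitRingType) (G : {group {unit R}}).
Local Notation coset := (Defs.coset_of G).

Lemma coset_ofP x y :
  reflect (exists2 v, v \in G & y = x * val v) (y \in coset x).
Proof. by apply: (iffP imsetP) => -[v Gv ->]; exists v. Qed.

Lemma mem_coset_of x : x \in coset x.
Proof. by apply/coset_ofP; exists 1%g; rewrite ?group1 // mulr1. Qed.

Lemma coset_ofM x v : v \in G -> coset (x * val v) = coset x.
Proof.
move=> Gv; apply/setP => y; apply/coset_ofP/coset_ofP => -[w Gw ->].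
  by exists (v * w)%g; rewrite ?groupM // FinRing.val_unitM mulrA.
exists (v^-1 * w)%g; rewrite ?groupM ?groupV // FinRing.val_unitM.
by rewrite FinRing.val_unitV mulrA mulrK // (valP v).
Qed.

Lemma coset_of_eq x y : y \in coset x -> coset y = coset x.
Proof. by case/coset_ofP => v Gv ->; apply: coset_ofM. Qed.

Lemma eq_coset_ofE x y : (coset y == coset x) = (y \in coset x).
Proof.
by apply/eqP/idP => [<-|/coset_of_eq //]; apply: mem_coset_of.
Qed.

Lemma partition_cosets_of : partition (cosets_of G) [set: R].
Proof.
have -> : cosets_of G = preim_partition coset [set: R].
  apply/setP => C; apply/imsetP/imsetP => -[x _ ->]; exists x => //;
  by apply/setP => y; rewrite !inE eq_sym eq_coset_ofE.
exact: preim_partitionP.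
Qed.

Lemma card_sum_cosets_of : #|R| = (\sum_(C in cosets_of G) #|C|)%N.
Proof. by rewrite -cardsT (card_partition partition_cosets_of). Qed.

Variable h : {set R} -> 'I_#|cosets_of G|.
Hypothesis h_inj : {in cosets_of G &, injective h}.

Lemma coset_index_fun_eqE x y :
  (coset_index_fun h y == coset_index_fun h x) = (y \in coset x).
Proof.
rewrite /coset_index_fun -eq_coset_ofE; apply/eqP/eqP => [|->] //.
by apply: h_inj; apply: imset_f.
Qed.

Lemma card_coset_index_fun_image :
  #|coset_index_fun h @: R| = #|cosets_of G|.
Proof.
have -> : coset_index_fun h @: R = h @: cosets_of G by rewrite -imset_comp.
exact: card_in_imset.
Qed.

End Cosets.

Lemma unitZp_prime p (z : 'Z_p) : prime p -> (z \is a GRing.unit) = (z != 0).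
Proof.
move=> p_pr; have p_gt1 := prime_gt1 p_pr.
have z_lt_p : (z < p)%N by rewrite -[p in (_ < p)%N](Zp_cast p_gt1).
rewrite -[z]natr_Zp unitZpE // prime_coprime // /dvdn modn_small //.
by rewrite natr_Zp -val_eqE.
Qed.

Lemma card_Zp_cycle_differences p (H : {group {unit 'Z_p}}) (a : 'Z_p) :
  prime p -> a != 0 ->
  #|[set b | [exists v in H, a == b * (val v - 1)]]| = #|H|.-1.
Proof.
move=> p_pr a_neq0.
have unit_sub1 (v : {unit 'Z_p}) : v != 1%g -> val v - 1 \is a GRing.unit.
  by rewrite unitZp_prime // subr_eq0 -val_eqE.
have -> : [set b | [exists v in H, a == b * (val v - 1)]] =
          [set a / (val v - 1) | v in H :\ 1%g].
  apply/setP => b; rewrite inE; apply/existsP/imsetP => -[v].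
    case/andP=> Hv /eqP a_def; have v_neq1 : v != 1%g.
      by apply: contra a_neq0 => /eqP v1; rewrite a_def v1 subrr mulr0.
    by exists v; rewrite ?inE ?v_neq1 // a_def mulrK ?unit_sub1.
  case/setD1P=> v_neq1 Hv ->; exists v.
  by rewrite Hv divrK ?unit_sub1 ?eqxx.
have a_unit : a \is a GRing.unit by rewrite unitZp_prime.
rewrite card_in_imset => [|v w /setD1P[v1 _] /setD1P[w1 _]].
  by rewrite (cardsD1 1%g H) group1.
by move/(mulrI a_unit)/invr_inj/addIr/val_inj.
Qed.

Lemma card_Zp_ord n : (1 < n)%N -> #|'Z_n| = n.
Proof. by move=> n_gt1; rewrite card_ord Zp_cast. Qed.

Lemma Zp_nat_eq0 n k : (1 < n)%N -> ((k%:R : 'Z_n) == 0) = (n %| k)%N.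
Proof. by move=> n_gt1; rewrite -val_eqE /= val_Zp_nat. Qed.

Section Reduction.
Variables n d : nat.
Hypotheses (d_gt1 : (1 < d)%N) (n_gt0 : (0 < n)%N) (d_dvd_n : (d %| n)%N).

Definition Zp_red (x : 'Z_n) : 'Z_d := (x : nat)%:R.

Lemma Zp_red_nat k : Zp_red k%:R = k%:R.
Proof.
have n_gt1 : (1 < n)%N by apply: leq_trans d_gt1 (dvdn_leq n_gt0 d_dvd_n).
by rewrite /Zp_red (val_Zp_nat n_gt1) -(Zp_nat_mod d_gt1) modn_dvdm // Zp_nat_mod.
Qed.

Lemma Zp_redD x y : Zp_red (x + y) = Zp_red x + Zp_red y.
Proof. by rewrite -[x]natr_Zp -[y]natr_Zp -natrD !Zp_red_nat natrD. Qed.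

Lemma Zp_red_is_zmod_morphism : zmod_morphism Zp_red.
Proof. by move=> x y; apply: (addIr (Zp_red y)); rewrite -Zp_redD !subrK. Qed.

Lemma Zp_red_is_monoid_morphism : monoid_morphism Zp_red.
Proof.
split=> [|x y]; first by move: (Zp_red_nat 1); rewrite !mulr1n.
by rewrite -[x]natr_Zp -[y]natr_Zp -natrM !Zp_red_nat natrM.
Qed.

Lemma Zp_redK (b : 'Z_d) : Zp_red (b : nat)%:R = b.
Proof. by rewrite Zp_red_nat natr_Zp. Qed.

End Reduction.

Section AdditiveFibers.
Variables (A B : finZmodType) (f : {additive A -> B}).
Hypothesis f_surj : forall b, exists x, f x = b.

Lemma card_additive_fiber b : #|f @^-1: [set b]| = #|f @^-1: [set 0]|.
Proof.
have [x0 <-] := f_surj b.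
have -> : f @^-1: [set f x0] = [set x0 + k | k in f @^-1: [set 0]].
  apply/setP => x; rewrite !inE; apply/eqP/imsetP => [fx|[k]].
    by exists (x - x0); [rewrite !inE raddfB fx subrr | rewrite addrC subrK].
  by rewrite !inE => /eqP fk0 ->; rewrite raddfD fk0 addr0.
by rewrite card_imset //; apply: addrI.
Qed.

Lemma card_additive_preimset (S : {set B}) :
  #|f @^-1: S| = (#|S| * #|f @^-1: [set 0%R]|)%N.
Proof.
rewrite -sum1_card (partition_big f (fun b => b \in S)) => [|x]; last by rewrite inE.
rewrite -sum_nat_const; apply: eq_bigr => b Sb.
rewrite -(card_additive_fiber b) -sum1_card; apply: eq_bigl => x.
by rewrite !inE; case: eqP => [->|_]; rewrite ?Sb ?andbF.
Qed.

End AdditiveFibers.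

Section LiftedCycleCosets.
Variables (m p : nat) (e : int) (c : {unit 'Z_p}) (u : {unit 'Z_(m * p)}) (t : nat).
Hypotheses (m_gt0 : (0 < m)%N) (p_pr : prime p) (m_p_coprime : coprime m p).
Hypotheses (e_mod_m : (e = 1 %[mod m])%Z) (c_def : val c = e%:~R) (u_def : val u = e%:~R).
Hypothesis order_c_t : (#[c]%g * t)%N = p.-1.

Local Notation ZN := 'Z_(m * p).
Local Notation red := (@Zp_red (m * p) p).
Local Notation G := <[u]>%G.
Local Notation coset := (Defs.coset_of G).

Let p_gt1 : (1 < p)%N := prime_gt1 p_pr.
Let mp_gt0 : (0 < m * p)%N. Proof. by rewrite muln_gt0 m_gt0 prime_gt0. Qed.
Let mp_gt1 : (1 < m * p)%N. Proof. exact: leq_trans p_gt1 (leq_pmull _ m_gt0). Qed.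
Let p_dvd_mp : (p %| m * p)%N. Proof. exact: dvdn_mull. Qed.

HB.instance Definition _ := GRing.isZmodMorphism.Build _ _ red
  (Zp_red_is_zmod_morphism p_gt1 mp_gt0 p_dvd_mp).
HB.instance Definition _ := GRing.isMonoidMorphism.Build _ _ red
  (Zp_red_is_monoid_morphism p_gt1 mp_gt0 p_dvd_mp).

Lemma card_red_preimset (S : {set 'Z_p}) : #|red @^-1: S| = (#|S| * m)%N.
Proof.
have red_surj b : exists x, red x = b by exists (b : nat)%:R; apply: Zp_redK.
suff card_ker : #|red @^-1: [set 0]| = m by rewrite card_additive_preimset ?card_ker.
have := card_additive_preimset red_surj [set: 'Z_p].
rewrite preimsetT !cardsT.
have -> : #|ZN| = (m * p)%N by exact: card_Zp_ord.
have -> : #|'Z_p| = p by exact: card_Zp_ord.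
by move/eqP; rewrite [X in _ == X]mulnC eqn_pmul2r ?prime_gt0 // => /eqP/esym.
Qed.

(* In Z_(mp), [p%:R * z = 0] expresses that z = 0 mod m. *)
Lemma red_mulp_eq0 (z : ZN) : p%:R * z = 0 -> red z = 0 -> z = 0.
Proof.
move=> /eqP pz0 /eqP rz0; apply/eqP; rewrite -[z]natr_Zp Zp_nat_eq0 //.
move: pz0 rz0; rewrite -[z in p%:R * z]natr_Zp -natrM Zp_nat_eq0 //.
rewrite [X in (_ %| X)%N]mulnC dvdn_pmul2r ?prime_gt0 // /Zp_red Zp_nat_eq0 //.
move=> m_dvd_z p_dvd_z.
by rewrite Gauss_dvd // m_dvd_z.
Qed.

Lemma red_mulp_inj (x y : ZN) : p%:R * x = p%:R * y -> red x = red y -> x = y.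
Proof.
move=> pxy rxy; apply/eqP; rewrite -subr_eq0; apply/eqP/red_mulp_eq0.
  by rewrite mulrBr pxy subrr.
by rewrite rmorphB /= rxy subrr.
Qed.

Lemma mulp_cycle v : v \in G -> p%:R * val v = p%:R.
Proof.
have /dvdzP[q e_sub1] : (m %| e - 1)%Z by rewrite -eqz_mod_dvd; apply/eqP.
have mulp_u_sub1 : p%:R * (val u - 1) = 0 :> ZN.
  rewrite u_def -[1]/(1%:~R) -mulrzBr e_sub1 intrM mulrCA -natrM (mulnC p m).
  by rewrite pchar_Zp // mulr0.
case/cycleP => k ->; apply/eqP; rewrite -subr_eq0 -[X in _ - X]mulr1 -mulrBr.
by rewrite FinRing.val_unitX subrX1 mulrA mulp_u_sub1 mul0r.
Qed.

Lemma red_expu k : red (val (u ^+ k)%g) = val (c ^+ k)%g.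
Proof. by rewrite !FinRing.val_unitX rmorphXn u_def rmorph_int c_def. Qed.

Lemma order_u : #[u]%g = #[c]%g.
Proof.
have expg_eq1 k : ((u ^+ k)%g == 1%g) = ((c ^+ k)%g == 1%g).
  apply/eqP/eqP => [uk1|ck1]; apply: val_inj; rewrite FinRing.val_unit1.
    by rewrite -red_expu uk1 FinRing.val_unit1 rmorph1.
  apply: red_mulp_inj; first by rewrite mulp_cycle ?mem_cycle // mulr1.
  by rewrite red_expu ck1 FinRing.val_unit1 rmorph1.
by apply/eqP; rewrite eqn_dvd !order_dvdn expg_eq1 expg_order -expg_eq1 expg_order.
Qed.

Lemma coset_red_eq0 x : red x = 0 -> coset x = [set x].
Proof.
move=> rx0; apply/setP => y; rewrite inE; apply/coset_ofP/eqP => [[v Gv ->]|->].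
  apply: red_mulp_inj; first by rewrite mulrCA mulp_cycle // mulrC.
  by rewrite rmorphM /= rx0 mul0r.
by exists 1%g; rewrite ?group1 // mulr1.
Qed.

Lemma card_coset_red_neq0 x : red x != 0 -> #|coset x| = #[c]%g.
Proof.
move=> rx0; rewrite card_in_imset -?order_u // => v w Gv Gw /= xvw.
apply/val_inj/red_mulp_inj; first by rewrite !mulp_cycle.
have rx_unit : red x \is a GRing.unit by rewrite unitZp_prime.
by apply: (mulrI rx_unit); rewrite -!rmorphM xvw.
Qed.

Let singletons : {set {set ZN}} := [set coset x | x in red @^-1: [set 0]].

Let card_singletons : #|singletons| = m.
Proof.
rewrite card_in_imset => [|x y]; first by rewrite card_red_preimset cards1 mul1n.
by rewrite !inE => /eqP/coset_red_eq0-> /eqP/coset_red_eq0->; apply: set1_inj.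
Qed.

Let singletons_sub : singletons \subset cosets_of G.
Proof. by apply/subsetP => _ /imsetP[x _ ->]; apply: imset_f. Qed.

Lemma card_cosets_of : #|cosets_of G| = (m * (1 + t))%N.
Proof.
have := card_sum_cosets_of G.
rewrite (big_setID singletons) /= (setIidPr singletons_sub).
rewrite (eq_bigr (fun _ => 1%N)) => [|C /imsetP[x]]; last first.
  by rewrite !inE => /eqP/coset_red_eq0-> ->; rewrite cards1.
rewrite [X in (_ + X)%N](eq_bigr (fun _ => #[c]%g)) => [|C]; last first.
  case/setDP=> /imsetP[x _ ->] x_single; apply: card_coset_red_neq0.
  by apply: contra x_single => rx0; apply: imset_f; rewrite !inE.
rewrite !sum_nat_const card_singletons muln1 card_Zp_ord //.
rewrite -(cardsID singletons (cosets_of G)) (setIidPr singletons_sub) card_singletons.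
move: #|_ :\: singletons| (order_gt0 c) order_c_t => D.
move: #[c]%g => s s_gt0 st.
rewrite -(prednK (prime_gt0 p_pr)) -st mulnS => /addnI; rewrite mulnCA [RHS]mulnC => /eqP.
by rewrite eqn_pmul2l // => /eqP <-; rewrite mulnDr muln1.
Qed.

Lemma zero_diff_set_eq0 a : p%:R * a != 0 -> [set x | x + a \in coset x] = set0.
Proof.
move=> pa0; apply/setP => x; rewrite !inE; apply: contraNF pa0 => /coset_ofP[v Gv xav].
have -> : a = x * val v - x by rewrite -xav addrC addKr.
by rewrite mulrBr mulrCA mulp_cycle // mulrC subrr.
Qed.

Lemma card_zero_diff_set a : a != 0 -> p%:R * a = 0 ->
  #|[set x | x + a \in coset x]| = (m * #[c]%g.-1)%N.
Proof.
move=> a0 pa0.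
have ra0 : red a != 0 by apply: contra a0 => /eqP ra0; apply/eqP/red_mulp_eq0.
have -> : [set x | x + a \in coset x] =
          red @^-1: [set b | [exists w in <[c]>%g, red a == b * (val w - 1)]].
  apply/setP => x; rewrite !inE; apply/coset_ofP/existsP.
    case=> v /cycleP[k ->] xav; exists (c ^+ k)%g; rewrite mem_cycle /=.
    have -> : a = x * (val (u ^+ k)%g - 1) by rewrite mulrBr mulr1 -xav addrC addKr.
    by rewrite rmorphM rmorphB rmorph1 /= red_expu.
  case=> w /andP[/cycleP[k ->] /eqP rak]; exists (u ^+ k)%g; first exact: mem_cycle.
  apply: red_mulp_inj.
    by rewrite mulrDr pa0 addr0 mulrCA mulp_cycle ?mem_cycle // mulrC.
  by rewrite rmorphD rmorphM /= red_expu rak mulrBr mulr1 addrC subrK.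
by rewrite card_red_preimset (card_Zp_cycle_differences <[c]>%G) // mulnC.
Qed.

Lemma coset_index_fun_zero_difference (h : {set ZN} -> 'I_#|cosets_of G|) :
  {in cosets_of G &, injective h} ->
  zero_difference_fun (coset_index_fun h) (m * p) (m * (1 + t))
    [:: 0%N; (m * (#[c]%g - 1))%N].
Proof.
move=> h_inj; split.
- exact: card_Zp_ord.
- by rewrite card_coset_index_fun_image // card_cosets_of.
move=> a a0; have -> : [set x | coset_index_fun h (x + a) == coset_index_fun h x] =
                      [set x | x + a \in coset x].
  by apply/setP => x; rewrite !inE coset_index_fun_eqE.
have [pa0|pa0] := eqVneq (p%:R * a) 0.
  by rewrite card_zero_diff_set // subn1 !inE eqxx orbT.
by rewrite zero_diff_set_eq0 // cards0 inE.
Qed.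

End LiftedCycleCosets.

Theorem theorem3p9 (m p s t : nat) (g : {unit 'Z_p}) (e : int)
  (u : {unit 'Z_(m * p)}) (h : {set 'Z_(m * p)} -> 'I_#|cosets_of <[u]>%g|) :
  (0 < m)%N -> prime p -> coprime m p ->
  (0 < s)%N -> (0 < t)%N -> (s * t)%N = p.-1 ->
  <[g]>%g = [set: {unit 'Z_p}] ->
  (e = 1 %[mod (m : int)])%Z ->
  (e%:~R = val g ^+ t :> 'Z_p) ->
  val u = e%:~R ->
  bij_on_cosets h ->
  zero_difference_fun (coset_index_fun h) (m * p) (m * (1 + t)) [:: 0%N; (m * (s - 1))%N].
Proof.
move=> m_gt0 p_pr m_p_coprime _ t_gt0 st_eq gen_g e_mod_m e_mod_p u_def [h_inj _].
have order_g : #[g]%g = p.-1.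
  by rewrite /order gen_g -/(units_Zp p) card_units_Zp ?prime_gt0 // totient_prime.
have order_gt : #[g ^+ t]%g = s by rewrite orderXdiv order_g -st_eq ?dvdn_mull // mulnK.
have gt_def : val (g ^+ t)%g = e%:~R by rewrite FinRing.val_unitX e_mod_p.
have order_gt_t : (#[g ^+ t]%g * t)%N = p.-1 by rewrite order_gt.
have := coset_index_fun_zero_difference m_gt0 p_pr m_p_coprime e_mod_m gt_def u_def
  order_gt_t h_inj.
by rewrite order_gt.
Qed.
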